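(* Let $s\ge 1$, $q=4^{2s}$, and let $\theta$ be the automorphism of $F_q$ given by $\theta(a)=a^{4^s}$. Let $n$ be an even positive integer and let $g(x)\in F_q[x;\theta]$ be a right divisor of $x^n-1$ in $F_q[x;\theta]$ whose degree $m$ is even. Then the skew cyclic code $C=\langle g(x)\rangle$ of length $n$ over $F_q$ is a reversible DNA code if and only if $g(x)$ is a palindromic polynomial.
   Context: $F_q[x;\theta]$ is the skew polynomial ring: polynomials $\sum a_ix^i$ with $a_i\in F_q$, usual addition, and multiplication determined by $xa=\theta(a)x$ for $a\in F_q$. A skew cyclic code of length $n$ is a linear code $C\subseteq F_q^n$ such that $(\theta(c_{n-1}),\theta(c_0),\ldots,\theta(c_{n-2}))\in C$ whenever $(c_0,\ldots,c_{n-1})\in C$; identifying $(c_0,\ldots,c_{n-1})$ with $c_0+c_1x+\dots+c_{n-1}x^{n-1}$, such codes are the left $F_q[x;\theta]$-submodules of $F_q[x;\theta]/(x^n-1)$, and $\langle g(x)\rangle$ denotes the left submodule generated by $g(x)$ (the generator need not be monic). A polynomial $f(x)=a_0+a_1x+\dots+a_tx^t$ of degree $t$ is palindromic if $a_i=a_{t-i}$ for all $i$, and $\theta$-palindromic if $a_i=\theta(a_{t-i})$ for all $i$. DNA correspondence: there is a fixed bijection $\tau:F_{4^{2s}}\to\{A,T,G,C\}^{2s}$ such that for every $\beta$, $\tau(\beta^{4^s})$ is the reverse of the string $\tau(\beta)$; it extends to $\phi:F_q^n\to\{A,T,G,C\}^{2sn}$ by concatenation, $\phi(c_0,\ldots,c_{n-1})=(\tau(c_0),\ldots,\tau(c_{n-1}))$.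 A code $C\subseteq F_q^n$ is a reversible DNA code if the reverse string $\phi(c)^r$ lies in $\phi(C)$ for all $c\in C$; equivalently, $(\theta(c_{n-1}),\ldots,\theta(c_1),\theta(c_0))\in C$ for every $(c_0,\ldots,c_{n-1})\in C$. *)

From HB Require Import structures.
From mathcomp Require Import all_boot all_order all_algebra all_field.
Set Implicit Arguments. Unset Strict Implicit. Unset Printing Implicit Defensive.
Import GRing.Theory.
Local Open Scope ring_scope.

(* Skew polynomials F[x;theta] are represented by ordinary coefficient
   polynomials {poly F}; addition is the usual one and multiplication is
   the skew product determined by x a = theta(a) x, i.e.
   (sum a_i x^i)(sum b_j x^j) = sum a_i theta^i(b_j) x^(i+j). *)
Definition skew_mul (F : fieldType) (theta : F -> F) (p q : {poly F}) : {poly F} :=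
  \sum_(i < size p) \sum_(j < size q)
     (p`_i * iter i theta q`_j) *: 'X^(i + j).

Definition skew_rdvd (F : fieldType) (theta : F -> F) (g f : {poly F}) : Prop :=
  exists h : {poly F}, f = skew_mul theta h g.

Definition poly_of_word (F : fieldType) n (c : n.-tuple F) : {poly F} :=
  \poly_(i < n) nth 0 c i.

(* Membership in the left submodule <g> of F[x;theta]/(x^n - 1), i.e. the
   image of the left ideal F[x;theta] g + F[x;theta] (x^n - 1). *)
Definition skew_code (F : fieldType) (theta : F -> F) (n : nat) (g : {poly F})
  (c : n.-tuple F) : Prop :=
  exists f h : {poly F},
    poly_of_word c = skew_mul theta f g + skew_mul theta h ('X^n - 1).

Inductive DNA := DA | DT | DG | DC.

Definition phi (F : fieldType) (k : nat) (tau : F -> k.-tuple DNA) n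
  (c : n.-tuple F) : seq DNA :=
  flatten (map (fun b => tval (tau b)) (tval c)).

Definition reversible_DNA (F : fieldType) (k : nat) (tau : F -> k.-tuple DNA)
  n (C : n.-tuple F -> Prop) : Prop :=
  forall c, C c -> exists c', C c' /\ phi tau c' = rev (phi tau c).

Definition palindromic (F : fieldType) (f : {poly F}) : Prop :=
  forall i, (i <= (size f).-1)%N -> f`_i = f`_((size f).-1 - i).

Arguments skew_code {F} theta n g c.

From HB Require Import structures.
From mathcomp Require Import all_boot all_order all_algebra all_field.
From mathcomp Require Import zify.

(* Since |F| = 4^(2s), theta(a) = a^(4^s) is an involutive ring automorphism of
   a field of characteristic 2.  The theta-reversal rho_n(c)_l = theta(c_(n-1-l))
   of words of length n is then anti-multiplicative: if m = deg g and a g has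
   length at most n, then rho_n(a g) = rho_(n-m)(a) g*, where g* is the
   reciprocal of g (the powers of theta on both sides agree because n - m is
   even).  Codewords are exactly the products a g of length at most n, so a
   palindromic g (g* = g) gives a rho-closed code.  Conversely, rho_n maps the
   codeword x^(n-m-1) g to g*, so g* = c g for a constant c; comparing extreme
   coefficients gives c^2 = 1, i.e. c = 1.  (If m = n, g is a scalar multiple of
   x^n - 1 and g* = -g.)  Finally, as tau is injective and tau(theta b) is the
   reverse of tau(b), phi(c)^r lies in phi(C) exactly when rho_n(c) lies in C. *)

Set Implicit Arguments. Unset Strict Implicit. Unset Printing Implicit Defensive.
Import GRing.Theory.
Local Open Scope ring_scope.

Lemma iter_involutive (T : Type) (f : T -> T) :
  involutive f -> forall i, iter i f =1 iter (odd i) f.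
Proof.
move=> fK; elim=> // i IHi x; rewrite iterS IHi /=.
by case: (odd i) => //=; rewrite fK.
Qed.

Lemma mul_monomials (R : comNzRingType) (a b : R) i j :
  (a *: 'X^i) * (b *: 'X^j) = (a * b) *: 'X^(i + j) :> {poly R}.
Proof. by rewrite -scalerAl -scalerAr scalerA exprD. Qed.

Lemma coef_monomialM (R : nzRingType) (a : R) i p k :
  ((a *: 'X^i) * p)`_k = if (k < i)%N then 0 else a * p`_(k - i).
Proof. by rewrite -scalerAl coefZ coefXnM; case: ifP; rewrite ?mulr0. Qed.

Definition reciprocal (R : nzRingType) (p : {poly R}) : {poly R} :=
  \poly_(j < size p) p`_((size p).-1 - j).

Section Reciprocal.
Variable F : fieldType.
Implicit Types p g : {poly F}.

Lemma palindromicE g : palindromic g <-> reciprocal g = g.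
Proof.
split=> [g_pal | g_rec i le_i].
  apply/polyP => j; rewrite coef_poly; case: ltnP => [lt_j|le_j].
    by rewrite [RHS]g_pal // -ltnS (ltn_predK lt_j).
  by rewrite nth_default.
rewrite -[in LHS]g_rec coef_poly; case: ltnP => // le_g_i.
have := leq_trans le_g_i le_i.
by rewrite leqNgt ltn_predL size_poly_gt0 negbK => /eqP ->; rewrite coef0.
Qed.

Lemma reciprocal_neq0 p : p != 0 -> reciprocal p != 0.
Proof.
move=> p_neq0; have: (reciprocal p)`_0 = lead_coef p.
  by rewrite coef_poly size_poly_gt0 p_neq0 subn0.
by apply: contra_eqN => /eqP ->; rewrite coef0 eq_sym lead_coef_eq0.
Qed.

Lemma reciprocalZ c p : c != 0 -> reciprocal (c *: p) = c *: reciprocal p.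
Proof.
move=> c_neq0; apply/polyP => j.
by rewrite coefZ !coef_poly size_scale // coefZ; case: ifP; rewrite ?mulr0.
Qed.

Lemma reciprocal_XnB1 n : (0 < n)%N -> reciprocal ('X^n - 1 : {poly F}) = - ('X^n - 1).
Proof.
move=> n_gt0; apply/polyP => j.
rewrite coef_poly -{1}polyC1 size_XnsubC // coefN !coefB !coefXn !coef1 /=.
case: ltnP => [lt_j|le_j].
  have -> : (n - j == n)%N = (j == 0)%N by apply/eqP/eqP; lia.
  have -> : (n - j == 0)%N = (j == n)%N by apply/eqP/eqP; lia.
  by rewrite opprB.
by rewrite !gtn_eqF ?subrr ?oppr0 //; lia.
Qed.

Lemma reciprocal_scale_pchar2 g c : 2 \in [pchar F] ->
  reciprocal g = c *: g -> reciprocal g = g.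
Proof.
move=> pchar2; have [->|g_neq0] := eqVneq g 0; first by move=> ->; rewrite scaler0.
move=> rec_g.
have coef_rec j : (j <= (size g).-1)%N -> g`_((size g).-1 - j) = c * g`_j.
  move=> le_j; rewrite -coefZ -rec_g coef_poly ifT //.
  by rewrite (polySpred g_neq0) ltnS.
have c2 : c ^+ 2 = 1.
  have := coef_rec 0%N (leq0n _); have := coef_rec _ (leqnn _).
  rewrite subnn subn0 => g0 gm.
  have lead_neq0 : lead_coef g != 0 by rewrite lead_coef_eq0.
  apply: (mulIf lead_neq0); rewrite mul1r lead_coefE expr2 -mulrA -g0.
  by rewrite -gm.
have c1 : c = 1 by move/eqP: c2; rewrite sqrf_eq1 (oppr_pchar2 pchar2) orbb => /eqP.
by rewrite rec_g c1 scale1r.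
Qed.

End Reciprocal.

Definition word_rev (T : Type) (f : T -> T) n (c : n.-tuple T) : n.-tuple T :=
  [tuple of rev (map f c)].

Definition rev_closed (T : Type) (f : T -> T) n (C : n.-tuple T -> Prop) :=
  forall c, C c -> C (word_rev f c).

Lemma poly_of_word_mktuple (F : fieldType) n (P : {poly F}) :
  (size P <= n)%N -> poly_of_word [tuple P`_i | i < n] = P.
Proof.
move=> le_P_n; apply/polyP => l; rewrite coef_poly; case: ltnP => [lt_l|le_l].
  by rewrite -[l]/(nat_of_ord (Ordinal lt_l)) -tnth_nth tnth_mktuple.
by rewrite nth_default // (leq_trans le_P_n).
Qed.

Section SkewPolynomials.
Variables (F : fieldType) (theta : {rmorphism F -> F}).

Implicit Types p q r a g : {poly F}.

Local Notation twist i := (iter i (map_poly theta)).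

Lemma iter_rmorph0 i : iter i theta 0 = 0.
Proof. by elim: i => //= i ->; rewrite rmorph0. Qed.

Lemma iter_fmorph_eq0 i x : (iter i theta x == 0) = (x == 0).
Proof. by elim: i => //= i <-; rewrite fmorph_eq0. Qed.

Lemma coef_twist i q k : (twist i q)`_k = iter i theta q`_k.
Proof. by elim: i => //= i <-; rewrite coef_map. Qed.

Lemma size_twist i q : size (twist i q) = size q.
Proof. by elim: i => //= i <-; rewrite size_map_poly. Qed.

Lemma twist0 i : twist i 0 = 0.
Proof. by elim: i => //= i ->; rewrite rmorph0. Qed.

Lemma twistD i p q : twist i (p + q) = twist i p + twist i q.
Proof. by elim: i => //= i ->; rewrite rmorphD. Qed.

Lemma twistM i p q : twist i (p * q) = twist i p * twist i q.
Proof. by elim: i => //= i ->; rewrite rmorphM. Qed.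

Lemma twistZ i c q : twist i (c *: q) = iter i theta c *: twist i q.
Proof. by elim: i => //= i ->; rewrite map_polyZ. Qed.

Lemma twistXn i j : twist i 'X^j = 'X^j.
Proof. by elim: i => //= i ->; rewrite map_polyXn. Qed.

Lemma twist_sum i I (r : seq I) (P : pred I) (G : I -> {poly F}) :
  twist i (\sum_(j <- r | P j) G j) = \sum_(j <- r | P j) twist i (G j).
Proof. exact: (big_morph _ (twistD i) (twist0 i)). Qed.

Lemma skew_mul_widen N p q : (size p <= N)%N ->
  skew_mul theta p q = \sum_(i < N) (p`_i *: 'X^i) * twist i q.
Proof.
move=> le_p_N; rewrite /skew_mul.
have row i : \sum_(j < size q) (p`_i * iter i theta q`_j) *: 'X^(i + j) =
             (p`_i *: 'X^i) * twist i q.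
  rewrite -[twist i q]coefK poly_def size_twist mulr_sumr.
  by apply: eq_bigr => j _; rewrite coef_twist mul_monomials.
under eq_bigr => i _ do rewrite row.
rewrite (big_ord_widen N (fun i => (p`_i *: 'X^i) * twist i q)) // big_mkcond.
apply: eq_bigr => i _; case: ltnP => // le_p_i.
by rewrite nth_default // scale0r mul0r.
Qed.

Lemma skew_mulE p q :
  skew_mul theta p q = \sum_(i < size p) (p`_i *: 'X^i) * twist i q.
Proof. exact: skew_mul_widen. Qed.

Lemma skew_mul0l q : skew_mul theta 0 q = 0.
Proof. by rewrite skew_mulE size_poly0 big_ord0. Qed.

Lemma skew_mul0r p : skew_mul theta p 0 = 0.
Proof. by rewrite skew_mulE big1 // => i _; rewrite twist0 mulr0. Qed.

Lemma skew_mulDl p1 p2 q :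
  skew_mul theta (p1 + p2) q = skew_mul theta p1 q + skew_mul theta p2 q.
Proof.
pose N := maxn (size p1) (size p2).
rewrite !(@skew_mul_widen N) ?leq_maxl ?leq_maxr ?(leq_trans (size_polyD _ _)) //.
by rewrite -big_split; apply: eq_bigr => i _; rewrite coefD scalerDl mulrDl.
Qed.

Lemma skew_mul_suml I (r : seq I) (P : pred I) (G : I -> {poly F}) q :
  skew_mul theta (\sum_(i <- r | P i) G i) q =
  \sum_(i <- r | P i) skew_mul theta (G i) q.
Proof.
exact: (big_morph _ (fun p1 p2 => skew_mulDl p1 p2 q) (skew_mul0l q)).
Qed.

Lemma skew_mul_monomial (a : F) i q :
  skew_mul theta (a *: 'X^i) q = (a *: 'X^i) * twist i q.
Proof.
rewrite (@skew_mul_widen i.+1) ?(leq_trans (size_scale_leq _ _)) ?size_polyXn //.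
rewrite big_ord_recr /= big1 ?add0r ?coefZ ?coefXn ?eqxx ?mulr1 // => j _.
by rewrite coefZ coefXn ltn_eqF // mulr0 scale0r mul0r.
Qed.

Lemma skew_mul_polyC c q : skew_mul theta c%:P q = c *: q.
Proof. by rewrite -alg_polyC -(expr0 'X) skew_mul_monomial expr0 -scalerAl mul1r. Qed.

Lemma skew_mulA p q r :
  skew_mul theta (skew_mul theta p q) r = skew_mul theta p (skew_mul theta q r).
Proof.
rewrite [skew_mul _ p q]skew_mulE [skew_mul _ p (skew_mul _ q r)]skew_mulE.
rewrite skew_mul_suml; apply: eq_bigr => i _.
rewrite [skew_mul _ q r]skew_mulE -[q in LHS]coefK poly_def.
rewrite !twist_sum !mulr_sumr skew_mul_suml; apply: eq_bigr => j _.
rewrite twistM !twistZ !twistXn mulrA !mul_monomials skew_mul_monomial.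
by rewrite -iterD.
Qed.

Lemma size_skew_mul p q : p != 0 -> q != 0 ->
  ((size p + size q).-1 <= size (skew_mul theta p q))%N.
Proof.
move=> p_neq0 q_neq0; have sp := polySpred p_neq0; have sq := polySpred q_neq0.
have : (skew_mul theta p q)`_((size p).-1 + (size q).-1) != 0.
  rewrite skew_mulE coef_sum sp big_ord_recr /= big1 ?add0r.
    rewrite coef_monomialM ltnNge leq_addr /= addKn coef_twist.
    by rewrite mulf_neq0 ?iter_fmorph_eq0 -?lead_coefE ?lead_coef_eq0.
  move=> i _; rewrite coef_monomialM coef_twist; case: ifP => // _.
  rewrite [q`__]nth_default ?iter_rmorph0 ?mulr0 //.
  have le_i_dp : (i <= (size p).-1)%N := ltnW (ltn_ord i).
  by rewrite -addnBAC // {1}sq -add1n leq_add2r subn_gt0.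
move=> coef_neq0; rewrite {1}sp {1}sq addSn addnS ltnNge.
by apply: contra coef_neq0 => /(nth_default 0) ->.
Qed.

Definition skew_rev n p : {poly F} := \poly_(l < n) theta p`_(n.-1 - l).

Lemma skew_revD n p q : skew_rev n (p + q) = skew_rev n p + skew_rev n q.
Proof.
apply/polyP => l; rewrite coefD !coef_poly.
by case: ifP; rewrite ?addr0 // coefD rmorphD.
Qed.

Lemma skew_rev0 n : skew_rev n 0 = 0.
Proof. by apply/polyP => l; rewrite coef_poly !coef0 rmorph0; case: ifP. Qed.

Lemma skew_rev_sum n I (r : seq I) (P : pred I) (G : I -> {poly F}) :
  skew_rev n (\sum_(j <- r | P j) G j) = \sum_(j <- r | P j) skew_rev n (G j).
Proof. exact: (big_morph _ (skew_revD n) (skew_rev0 n)). Qed.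

Lemma skew_rev_monomial N (a : F) i : (i < N)%N ->
  skew_rev N (a *: 'X^i) = theta a *: 'X^(N.-1 - i).
Proof.
move=> lt_i_N; apply/polyP => l; rewrite coef_poly !coefZ !coefXn.
case: ltnP => [lt_l_N|le_N_l].
  rewrite rmorphM rmorph_nat; congr (_ * (nat_of_bool _)%:R).
  by apply/eqP/eqP; lia.
by rewrite (_ : (l == _) = false) ?mulr0 //; apply/eqP; lia.
Qed.

Lemma skew_rev_monomialM n b i g : (i + size g <= n)%N ->
  skew_rev n ((b *: 'X^i) * twist i g) =
  (theta b *: 'X^(n - size g - i)) * twist i.+1 (reciprocal g).
Proof.
move=> le_n; apply/polyP => l.
rewrite /skew_rev coef_poly !coef_monomialM !coef_twist /reciprocal coef_poly.
(* [lia] sees the [size g] coming from [reciprocal] as a different atom. *)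
set sg := size g in le_n *.
case: (ltnP l n) => [lt_l_n|le_n_l]; last first.
  by rewrite !ifN ?iter_rmorph0 ?mulr0 // -leqNgt; lia.
case: (ltnP (n.-1 - l) i) => [lt_i|le_i].
  by rewrite rmorph0 !ifN ?iter_rmorph0 ?mulr0 // -leqNgt; lia.
case: (ltnP l (n - sg - i)) => [lt_l|le_l].
  by rewrite nth_default ?iter_rmorph0 ?mulr0 ?rmorph0 // -/sg; lia.
rewrite ifT; last by lia.
by rewrite rmorphM /=; congr (_ * theta (iter i theta g`_ _)); lia.
Qed.

Lemma poly_of_word_rev n (c : n.-tuple F) :
  poly_of_word (word_rev theta c) = skew_rev n (poly_of_word c).
Proof.
apply/polyP => l; rewrite !coef_poly; case: ltnP => // lt_l_n.
rewrite nth_rev size_map size_tuple // (nth_map 0) ?size_tuple; last by lia.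
by rewrite ifT; [congr (theta (nth 0 c _)) | ]; lia.
Qed.

Lemma reciprocal_skew_mul_scale a g : g != 0 ->
  reciprocal g = skew_mul theta a g -> exists c, reciprocal g = c *: g.
Proof.
move=> g_neq0 rec_g.
have a_neq0 : a != 0.
  by apply: contra_neq (reciprocal_neq0 g_neq0) => a0; rewrite rec_g a0 skew_mul0l.
have /size_poly1P [c _ ac] : size a == 1%N.
  rewrite eqn_leq size_poly_gt0 a_neq0 andbT.
  have := size_skew_mul a_neq0 g_neq0; rewrite -rec_g.
  move/leq_trans/(_ (size_poly _ _)).
  by rewrite (polySpred g_neq0) addnS /= -add1n leq_add2r.
by exists c; rewrite rec_g ac skew_mul_polyC.
Qed.

Section Involution.
Hypothesis thetaK : involutive theta.

Lemma twist_odd i q : twist i q = twist (odd i) q.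
Proof. by apply/polyP => k; rewrite !coef_twist (iter_involutive thetaK). Qed.

Lemma skew_rev_mul n m a g : size g = m.+1 -> odd n = odd m ->
  (size a + m <= n)%N ->
  skew_rev n (skew_mul theta a g) =
  skew_mul theta (skew_rev (n - m) a) (reciprocal g).
Proof.
move=> sg n_par le_n.
rewrite skew_mulE skew_rev_sum -[a in skew_rev _ a]coefK poly_def.
rewrite skew_rev_sum skew_mul_suml; apply: eq_bigr => i _.
have lt_i := ltn_ord i.
rewrite skew_rev_monomialM; last by rewrite sg; lia.
rewrite skew_rev_monomial; last by lia.
rewrite skew_mul_monomial sg (_ : (n - m).-1 - i = n - m.+1 - i)%N; last by lia.
have par : odd i.+1 = odd (n - m.+1 - i).
  have /(congr1 odd) : n = (n - m.+1 - i + i.+1 + m)%N by lia.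
  rewrite !oddD n_par.
  by case: (odd m); case: (odd i.+1); case: (odd (n - m.+1 - i)).
by rewrite twist_odd [in RHS]twist_odd par.
Qed.

End Involution.

End SkewPolynomials.

Section DNAWords.
Variables (F : fieldType) (k : nat) (tau : F -> k.-tuple DNA).

Lemma phi_inj n : injective tau -> injective (@phi F k tau n).
Proof.
move=> tau_inj; pose f b := tval (tau b).
have f_inj : injective f by move=> b1 b2 /val_inj /tau_inj.
have shape_f (s : seq F) : shape (map f s) = nseq (size s) k.
  by elim: s => //= b s ->; rewrite size_tuple.
have reshape_phi (c : n.-tuple F) : reshape (nseq n k) (phi tau c) = map f c.
  by rewrite -[n in nseq n k](size_tuple c) -shape_f flattenK.
by move=> c1 c2 eq_phi; apply/val_inj/(inj_map f_inj); rewrite -!reshape_phi eq_phi.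
Qed.

Lemma rev_phi (theta : F -> F) n (c : n.-tuple F) :
  (forall b, tval (tau (theta b)) = rev (tval (tau b))) ->
  rev (phi tau c) = phi tau (word_rev theta c).
Proof.
move=> tau_rev; rewrite /phi rev_flatten /= map_rev -!map_comp.
by congr (flatten (rev _)); apply: eq_map => b /=; rewrite tau_rev.
Qed.

Lemma reversible_DNAP (theta : F -> F) n (C : n.-tuple F -> Prop) :
  injective tau -> (forall b, tval (tau (theta b)) = rev (tval (tau b))) ->
  reversible_DNA tau C <-> rev_closed theta C.
Proof.
move=> tau_inj tau_rev; split=> [rev_C c Cc | closed_C c Cc].
  have [c' [Cc' eq_c']] := rev_C c Cc; rewrite (rev_phi _ tau_rev) in eq_c'.
  by rewrite -(phi_inj tau_inj eq_c').
by exists (word_rev theta c); split; [exact: closed_C | rewrite (rev_phi _ tau_rev)].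
Qed.

End DNAWords.

Section SkewCyclicCode.
Variables (F : fieldType) (theta : {rmorphism F -> F}) (n : nat) (g k : {poly F}).
Hypotheses (n_gt0 : (0 < n)%N) (XnB1E : 'X^n - 1 = skew_mul theta k g).

Lemma skew_codeP c :
  skew_code theta n g c <-> exists a, poly_of_word c = skew_mul theta a g.
Proof.
split=> [[f [h ->]] | [a eq_c]]; last by exists a, 0; rewrite eq_c skew_mul0l addr0.
by exists (f + skew_mul theta h k); rewrite XnB1E -skew_mulA skew_mulDl.
Qed.

Lemma XnB1_neq0 : ('X^n - 1 : {poly F}) != 0.
Proof. by rewrite -size_poly_eq0 -polyC1 size_XnsubC. Qed.

Lemma divisor_neq0 : g != 0.
Proof. by apply: contraNneq XnB1_neq0 => g0; rewrite XnB1E g0 skew_mul0r. Qed.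

Lemma cofactor_neq0 : k != 0.
Proof. by apply: contraNneq XnB1_neq0 => k0; rewrite XnB1E k0 skew_mul0l. Qed.

Lemma size_divisor : (size g <= n.+1)%N.
Proof.
have := size_skew_mul theta cofactor_neq0 divisor_neq0.
rewrite -XnB1E -polyC1 size_XnsubC //; apply: leq_trans.
by rewrite (polySpred cofactor_neq0) addSn leq_addl.
Qed.

Lemma size_factor_codeword a : (size (skew_mul theta a g) <= n)%N ->
  (size a + (size g).-1 <= n)%N.
Proof.
have [->|a_neq0] := eqVneq a 0.
  by rewrite size_poly0 add0n -subn1 leq_subLR add1n size_divisor.
move=> le_n; apply: leq_trans le_n.
apply: leq_trans (size_skew_mul theta a_neq0 divisor_neq0).
by rewrite {2}(polySpred divisor_neq0) addnS.
Qed.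

Section Involution.
Hypotheses (thetaK : involutive theta) (n_par : odd n = odd (size g).-1).

Lemma rev_closed_of_palindromic :
  palindromic g -> rev_closed theta (skew_code theta n g).
Proof.
move=> /palindromicE g_rec c /skew_codeP [a c_eq]; apply/skew_codeP.
have le_n : (size a + (size g).-1 <= n)%N.
  by apply: size_factor_codeword; rewrite -c_eq size_poly.
exists (skew_rev theta (n - (size g).-1) a).
by rewrite poly_of_word_rev c_eq (skew_rev_mul thetaK (polySpred divisor_neq0)) // g_rec.
Qed.

Lemma reciprocal_full_divisor : size g = n.+1 -> reciprocal g = (-1) *: g.
Proof.
move=> sg; have : (size k <= 1)%N.
  have := size_skew_mul theta cofactor_neq0 divisor_neq0.
  by rewrite -XnB1E -polyC1 size_XnsubC // sg addnS /= -add1n leq_add2r.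
move=> le_k1; have /size_poly1P [c c_neq0 kc] : size k == 1%N.
  by rewrite eqn_leq le_k1 size_poly_gt0 cofactor_neq0.
have XnB1_c : 'X^n - 1 = c *: g by rewrite XnB1E kc skew_mul_polyC.
apply: (scalerI c_neq0).
by rewrite -reciprocalZ // -XnB1_c reciprocal_XnB1 // XnB1_c scaleN1r scalerN.
Qed.

Lemma reciprocal_scale_of_rev_closed : (size g <= n)%N ->
  rev_closed theta (skew_code theta n g) -> exists c, reciprocal g = c *: g.
Proof.
move=> le_g_n closed_C; have sg := polySpred divisor_neq0.
set m := (size g).-1 in sg *; rewrite sg in le_g_n.
pose i := (n - m.+1)%N; pose P := skew_mul theta 'X^i g.
have size_P : (size P <= n)%N.
  rewrite /P -['X^i]scale1r skew_mul_monomial scale1r.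
  by apply: leq_trans (size_polyMleq _ _) _; rewrite size_polyXn size_twist sg /i; lia.
have rev_P : skew_rev theta n P = reciprocal g.
  rewrite /P (skew_rev_mul thetaK sg) // ?size_polyXn; last by rewrite /i; lia.
  rewrite -['X^i]scale1r skew_rev_monomial; last by rewrite /i; lia.
  rewrite rmorph1 (_ : (n - m).-1 - i = 0)%N; last by rewrite /i; lia.
  by rewrite skew_mul_monomial /= expr0 scale1r mul1r.
have /closed_C/skew_codeP [a] : skew_code theta n g [tuple P`_j | j < n].
  by apply/skew_codeP; exists 'X^i; rewrite poly_of_word_mktuple.
rewrite poly_of_word_rev poly_of_word_mktuple // rev_P.
exact: reciprocal_skew_mul_scale divisor_neq0.
Qed.

Lemma palindromic_of_rev_closed : 2 \in [pchar F] ->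
  rev_closed theta (skew_code theta n g) -> palindromic g.
Proof.
move=> pchar2 closed_C; apply/palindromicE.
have [c rec_g] : exists c, reciprocal g = c *: g.
  have := size_divisor; rewrite leq_eqVlt => /orP [/eqP sg | lt_g].
    by exists (-1); apply: reciprocal_full_divisor.
  exact: reciprocal_scale_of_rev_closed.
exact: reciprocal_scale_pchar2 pchar2 rec_g.
Qed.

Lemma rev_closed_skew_codeP : 2 \in [pchar F] ->
  rev_closed theta (skew_code theta n g) <-> palindromic g.
Proof.
move=> pchar2; split; first exact: palindromic_of_rev_closed.
exact: rev_closed_of_palindromic.
Qed.

End Involution.

End SkewCyclicCode.

Section FrobeniusPower.
Variable R : comNzRingType.

(* As for [pFrobenius_aut], the proof argument only keys the instances below. *)
Definition Frobenius_pow e of [pchar R].-nat e := fun x : R => x ^+ e.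

Variables (e : nat) (pchar_e : [pchar R].-nat e).

Lemma Frobenius_pow_is_nmod_morphism : nmod_morphism (Frobenius_pow pchar_e).
Proof.
have e_gt0 : (0 < e)%N by case/andP: pchar_e.
by split=> [|x y]; rewrite /Frobenius_pow ?expr0n ?gtn_eqF ?exprDn_pchar.
Qed.

Lemma Frobenius_pow_is_monoid_morphism : monoid_morphism (Frobenius_pow pchar_e).
Proof. by split=> [|x y]; rewrite /Frobenius_pow ?expr1n ?exprMn. Qed.

HB.instance Definition _ := GRing.isNmodMorphism.Build R R (Frobenius_pow pchar_e)
  Frobenius_pow_is_nmod_morphism.
HB.instance Definition _ := GRing.isMonoidMorphism.Build R R (Frobenius_pow pchar_e)
  Frobenius_pow_is_monoid_morphism.

End FrobeniusPower.

Lemma Frobenius_pow_involutive (F : finFieldType) e (pchar_e : [pchar F].-nat e) :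
  #|F| = (e * e)%N -> involutive (Frobenius_pow pchar_e).
Proof. by move=> cardF x; rewrite /Frobenius_pow -exprM -cardF expf_card. Qed.

Theorem theorem1 (s : nat) (F : finFieldType)
  (tau : F -> (2 * s).-tuple DNA) (n : nat) (g : {poly F}) :
  (1 <= s)%N ->
  #|F| = (4 ^ (2 * s))%N ->
  bijective tau ->
  (forall b : F, tval (tau (b ^+ (4 ^ s))) = rev (tval (tau b))) ->
  (0 < n)%N -> ~~ odd n ->
  skew_rdvd (fun a : F => a ^+ (4 ^ s)) g ('X^n - 1) ->
  ~~ odd (size g).-1 ->
  (reversible_DNA tau (skew_code (fun a : F => a ^+ (4 ^ s)) n g)
   <-> palindromic g).
Proof.
(* [1 <= s] already follows from [#|F| = 4 ^ (2 * s)]. *)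
move=> _ cardF tau_bij tau_rev n_gt0 n_even [k XnB1E] m_even.
have pchar2 : 2 \in [pchar F].
  apply: (@card_finPcharP _ 2 (4 * s)) => //.
  by rewrite cardF (_ : 4 = 2 ^ 2)%N // -!expnM mulnA.
have pchar_e : [pchar F].-nat (4 ^ s)%N.
  by rewrite (_ : 4 = 2 ^ 2)%N // -expnM pnatX (pnatE _ (isT : prime 2)) pchar2.
pose theta : {rmorphism F -> F} := Frobenius_pow pchar_e.
have thetaK : involutive theta.
  by apply: Frobenius_pow_involutive; rewrite cardF mul2n -addnn expnD.
rewrite (reversible_DNAP _ (bij_inj tau_bij) tau_rev).
apply: (rev_closed_skew_codeP (theta := theta) n_gt0 XnB1E thetaK _ pchar2).
by rewrite (negbTE n_even) (negbTE m_even).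
Qed.
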